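(* Let $A$ be a commutative ring, $\sigma$ a hereditary torsion theory on $A$-modules, $\mathfrak{a}\subseteq A$ an ideal and $p:A\to A/\mathfrak{a}$ the canonical projection. Then $A$ is totally $\sigma$-artinian if and only if $\mathfrak{a}$ is a totally $\sigma$-artinian $A$-module and $A/\mathfrak{a}$ is a totally $\sigma$-artinian $A$-module (equivalently, the ring $A/\mathfrak{a}$ is totally $p(\sigma)$-artinian).
   Context: $\mathcal{L}(\sigma)$ is the Gabriel filter of $\sigma$. An $A$-module $M$ is totally $\sigma$-artinian if for every descending chain of submodules $N_1\supseteq N_2\supseteq\cdots$ there exist $m$ and $\mathfrak{h}\in\mathcal{L}(\sigma)$ with $N_m\mathfrak{h}\subseteq N_s$ for all $s\ge m$; the ring $A$ is totally $\sigma$-artinian if $A$ is so as an $A$-module. $p(\sigma)$ is the hereditary torsion theory on $A/\mathfrak{a}$-modules with Gabriel filter $\{\mathfrak{b}: p^{-1}(\mathfrak{b})\in\mathcal{L}(\sigma)\}$, and the ring $A/\mathfrak{a}$ is totally $p(\sigma)$-artinian if the analogous chain condition holds for its ideals with $\mathfrak{h}\in\mathcal{L}(p(\sigma))$. *)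

From mathcomp Require Import all_boot all_algebra.
From Stdlib Require Import ClassicalEpsilon.
Set Implicit Arguments. Unset Strict Implicit. Unset Printing Implicit Defensive.
Import GRing.Theory.
Local Open Scope ring_scope.

(* Submodules: subsets containing 0, closed under
   + and under scalar action (closure under negation follows by acting with -1). *)
Definition is_submodule (S M : Type) (z : M) (add : M -> M -> M)
  (act : S -> M -> M) (N : M -> Prop) : Prop :=
  [/\ N z, (forall x y, N x -> N y -> N (add x y))
    & (forall r x, N x -> N (act r x))].

(* Totally sigma-artinian, sigma given by its Gabriel filter F (a set of ideals
   of the scalar ring).  "N_m h ⊆ N_s" (N_m h = submodule generated by the
   products r x, r in h, x in N_m) is written out: every such product lies in N_s. *)
Definition totally_artinian (S M : Type) (F : (S -> Prop) -> Prop)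
  (z : M) (add : M -> M -> M) (act : S -> M -> M) : Prop :=
  forall N : nat -> M -> Prop,
    (forall n, is_submodule z add act (N n)) ->
    (forall n x, N n.+1 x -> N n x) ->
    exists m, exists h, F h /\
      forall s, (m <= s)%N -> forall r x, h r -> N m x -> N s (act r x).

Section Ring.
Variable A : comPzRingType.

Definition is_ideal (a : A -> Prop) : Prop := is_submodule 0 +%R *%R a.

(* Gabriel filter (Stenström, Ch. VI): the filter L(sigma) of a hereditary
   torsion theory sigma on A-Mod; these correspond bijectively to sigma. *)
Definition gabriel_filter (F : (A -> Prop) -> Prop) : Prop :=
  (forall b, F b -> is_ideal b) /\
  F (fun _ => True) /\
  (forall b c, F b -> is_ideal c -> (forall x, b x -> c x) -> F c) /\
  (forall b c, F b -> F c -> F (fun x => b x /\ c x)) /\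
  (forall b x, F b -> F (fun y => b (y * x))) /\
  (forall b c, is_ideal c -> F b ->
     (forall x, b x -> F (fun y => c (y * x))) -> F c).

Definition tsa_ring (F : (A -> Prop) -> Prop) : Prop :=
  totally_artinian F 0 +%R *%R.

Section IdealModule.
Variables (a : A -> Prop) (ha : is_ideal a).
Definition idl := {x : A | a x}.
Definition idl_zero : idl.
Proof. exists 0; by case: ha. Defined.
Definition idl_add (x y : idl) : idl.
Proof. exists (proj1_sig x + proj1_sig y); case: ha => _ H _; apply: H; exact: proj2_sig. Defined.
Definition idl_act (r : A) (x : idl) : idl.
Proof. exists (r * proj1_sig x); case: ha => _ _ H; apply: H; exact: proj2_sig. Defined.
End IdealModule.

Definition tsa_ideal (F : (A -> Prop) -> Prop) (a : A -> Prop) (ha : is_ideal a) : Prop :=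
  totally_artinian F (idl_zero ha) (@idl_add a ha) (@idl_act a ha).

Section Quotient.
Variable a : A -> Prop.
Definition coset (x : A) : A -> Prop := fun y => a (y - x).
Definition quot := {C : A -> Prop | exists x, C = coset x}.
Definition qp (x : A) : quot := exist _ (coset x) (ex_intro _ x erefl).
Definition qrep (C : quot) : A :=
  proj1_sig (constructive_indefinite_description _ (proj2_sig C)).
Definition q_zero : quot := qp 0.
Definition q_add (C D : quot) : quot := qp (qrep C + qrep D).
Definition q_act (r : A) (C : quot) : quot := qp (r * qrep C).
Definition q_mul (C D : quot) : quot := qp (qrep C * qrep D).
(* Gabriel filter of p(sigma) on A/a-modules. *)
Definition pfilter (F : (A -> Prop) -> Prop) : (quot -> Prop) -> Prop :=
  fun b => is_submodule q_zero q_add q_mul b /\ F (fun x => b (qp x)).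
End Quotient.

Definition tsa_quot_module (F : (A -> Prop) -> Prop) (a : A -> Prop) : Prop :=
  totally_artinian F (q_zero a) (@q_add a) (@q_act a).

Definition tsa_quot_ring (F : (A -> Prop) -> Prop) (a : A -> Prop) : Prop :=
  totally_artinian (pfilter F) (q_zero a) (@q_add a) (@q_mul a).
End Ring.

From mathcomp Require Import all_boot all_algebra.
From Stdlib Require Import ClassicalEpsilon ProofIrrelevance FunctionalExtensionality PropExtensionality.
Import GRing.Theory.

(* 1. Transfer along linear maps: if f : M -> M' is linear and injective, a
      descending chain in M is carried by f to a chain in M', and the total
      sigma-artinian bound comes back by injectivity; if f is surjective, a
      chain in M' is pulled back to M.  Applied to the inclusion a -> A and
      the projection p : A -> A/a this gives the direction
      "A totally sigma-artinian => a and A/a are".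
   2. Extension: given a chain (N_n) of ideals of A, the traces N_n ∩ a and
      the images p(N_n) are controlled by filter ideals h2 and h1 from some
      index on.  The ideal c of those y with y N_m ⊆ N_s for all s >= m
      satisfies (c : x) ⊇ h2 for every x in h1, so c lies in the Gabriel
      filter by its "transitivity" axiom.
   3. Change of scalars: on A/a, the A-action r·C equals p(r)·C, so the
      submodules for both actions coincide, and the filter ideals transfer
      via h |-> p(h) and b |-> p^{-1}(b). *)

Set Implicit Arguments.
Unset Strict Implicit.
Unset Printing Implicit Defensive.
Local Open Scope ring_scope.

Lemma chain_antitone (M : Type) (N : nat -> M -> Prop) :
  (forall n x, N n.+1 x -> N n x) ->
  forall i j x, (i <= j)%N -> N j x -> N i x.
Proof.
move=> Ndec i j x /subnK <-; elim: (j - i)%N => [|k IH] //= Nk.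
by apply: IH; apply: Ndec; rewrite addSn in Nk.
Qed.

Section LinearTransfer.
Variables (S M M' : Type) (F : (S -> Prop) -> Prop).
Variables (z : M) (add : M -> M -> M) (act : S -> M -> M).
Variables (z' : M') (add' : M' -> M' -> M') (act' : S -> M' -> M').
Variable f : M -> M'.
Hypothesis f_zero : f z = z'.
Hypothesis f_add : forall x y, f (add x y) = add' (f x) (f y).
Hypothesis f_act : forall r x, f (act r x) = act' r (f x).

Lemma submodule_image (N : M -> Prop) :
  is_submodule z add act N ->
  is_submodule z' add' act' (fun y => exists2 x, N x & y = f x).
Proof.
case=> N0 ND NZ; split.
- by exists z.
- by move=> _ _ [x Nx ->] [y Ny ->]; exists (add x y); [apply: ND | rewrite f_add].
- by move=> r _ [x Nx ->]; exists (act r x); [apply: NZ | rewrite f_act].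
Qed.

Lemma submodule_preimage (N' : M' -> Prop) :
  is_submodule z' add' act' N' -> is_submodule z add act (fun x => N' (f x)).
Proof.
case=> N0 ND NZ; split.
- by rewrite f_zero.
- by move=> x y Nx Ny; rewrite f_add; apply: ND.
- by move=> r x Nx; rewrite f_act; apply: NZ.
Qed.

Lemma totally_artinian_injective :
  injective f -> totally_artinian F z' add' act' -> totally_artinian F z add act.
Proof.
move=> f_inj TA K Ksub Kdec.
pose N n y := exists2 x, K n x & y = f x.
have Ndec n y : N n.+1 y -> N n y by case=> x Kx ->; exists x => //; apply: Kdec.
have [m [h [Fh Hh]]] := TA N (fun n => submodule_image (Ksub n)) Ndec.
exists m, h; split => // s le_ms r x hr Kx.
have [y Ky] := Hh s le_ms r (f x) hr (ex_intro2 _ _ x Kx erefl).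
by rewrite -f_act => /f_inj ->.
Qed.

Lemma totally_artinian_surjective :
  (forall y, exists x, y = f x) ->
  totally_artinian F z add act -> totally_artinian F z' add' act'.
Proof.
move=> f_surj TA Q Qsub Qdec.
have [m [h [Fh Hh]]] :=
  TA (fun n x => Q n (f x)) (fun n => submodule_preimage (Qsub n)) (fun n x => Qdec n _).
exists m, h; split => // s le_ms r y hr; have [x ->] := f_surj y.
by rewrite -f_act; apply: Hh.
Qed.

End LinearTransfer.

Lemma proj1_sig_inj (T : Type) (P : T -> Prop) : injective (@proj1_sig T P).
Proof.
by case=> [x px] [y py] /= exy; subst y; congr exist; apply: proof_irrelevance.
Qed.

Section IdealFacts.
Variables (A : comPzRingType) (b : A -> Prop).
Hypothesis hb : is_ideal b.

Lemma ideal0 : b 0. Proof. by case: hb. Qed.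
Lemma idealD x y : b x -> b y -> b (x + y). Proof. by case: hb => _ H _; apply: H. Qed.
Lemma idealMl r x : b x -> b (r * x). Proof. by case: hb => _ _ H; apply: H. Qed.
Lemma idealN x : b x -> b (- x). Proof. by move=> bx; rewrite -mulN1r; apply: idealMl. Qed.
Lemma idealB x y : b x -> b y -> b (x - y).
Proof. by move=> bx by'; apply: idealD => //; apply: idealN. Qed.

Lemma colon_ideal x : is_ideal (fun y => b (y * x)).
Proof.
split.
- by rewrite mul0r; apply: ideal0.
- by move=> y y' by1 by2; rewrite mulrDl; apply: idealD.
- by move=> r y byx; rewrite -mulrA; apply: idealMl.
Qed.

End IdealFacts.

Section IdealInclusion.
Variables (A : comPzRingType) (a : A -> Prop).
Hypothesis ha : is_ideal a.

Lemma idl_val_zero : proj1_sig (idl_zero ha) = 0.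
Proof. by []. Qed.

Lemma idl_val_add u v : proj1_sig (idl_add ha u v) = proj1_sig u + proj1_sig v.
Proof. by []. Qed.

Lemma idl_val_act r u : proj1_sig (idl_act ha r u) = r * proj1_sig u.
Proof. by []. Qed.

End IdealInclusion.

Section GabrielFilter.
Variables (A : comPzRingType) (F : (A -> Prop) -> Prop).
Hypothesis hF : gabriel_filter F.

Lemma filter_ideal b : F b -> is_ideal b.
Proof. by case: hF => ideals _; apply: ideals. Qed.

Lemma filter_upward b c : F b -> is_ideal c -> (forall x, b x -> c x) -> F c.
Proof. by case: hF => _ [_ [upward _]]; apply: upward. Qed.

Lemma filter_transitive b c :
  is_ideal c -> F b -> (forall x, b x -> F (fun y => c (y * x))) -> F c.
Proof. by case: hF => _ [_ [_ [_ [_ trans]]]]; apply: trans. Qed.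

End GabrielFilter.

Section Projection.
Variables (A : comPzRingType) (a : A -> Prop).
Hypothesis ha : is_ideal a.

Lemma qp_eq x y : a (x - y) -> qp a x = qp a y.
Proof.
move=> axy; apply: proj1_sig_inj; apply: functional_extensionality => w /=.
apply: propositional_extensionality; rewrite /coset; split => H.
- by rewrite -(addrNK x w) -addrA; apply: (idealD ha).
- by rewrite -(addrNK y w) -addrA -[y - x]opprB; apply: (idealB ha).
Qed.

Lemma qp_inj x y : qp a x = qp a y -> a (x - y).
Proof.
move/(f_equal (@proj1_sig _ _)) => /= e.
have : coset a x x by rewrite /coset subrr; apply: (ideal0 ha).
by rewrite e.
Qed.

Lemma qp_qrep (C : quot a) : qp a (qrep C) = C.
Proof.
apply: proj1_sig_inj; rewrite /qrep /=.
by case: (constructive_indefinite_description _ _).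
Qed.

Lemma qrep_qp x : a (qrep (qp a x) - x).
Proof. by apply: qp_inj; rewrite qp_qrep. Qed.

Lemma qp_surj (C : quot a) : exists x, C = qp a x.
Proof. by exists (qrep C); rewrite qp_qrep. Qed.

Lemma qp_zero : qp a 0 = q_zero a.
Proof. by []. Qed.

Lemma qp_add x y : qp a (x + y) = q_add (qp a x) (qp a y).
Proof. by apply/esym/qp_eq; rewrite opprD addrACA; apply: (idealD ha); apply: qrep_qp. Qed.

Lemma qp_act r x : qp a (r * x) = q_act r (qp a x).
Proof. by apply/esym/qp_eq; rewrite -mulrBr; apply: (idealMl ha); apply: qrep_qp. Qed.

Lemma q_act_mul r (D : quot a) : q_act r D = q_mul (qp a r) D.
Proof.
apply: qp_eq; rewrite -mulrBl mulrC; apply: (idealMl ha).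
by rewrite -opprB; apply: (idealN ha); apply: qrep_qp.
Qed.

End Projection.

Section Extension.
Variables (A : comPzRingType) (F : (A -> Prop) -> Prop) (a : A -> Prop).
Hypothesis hF : gabriel_filter F.
Hypothesis ha : is_ideal a.
Variable N : nat -> A -> Prop.
Hypothesis Nsub : forall n, is_ideal (N n).
Hypothesis Ndec : forall n x, N n.+1 x -> N n x.

Lemma trace_bound : tsa_ideal F ha ->
  exists m, exists2 h, F h &
    forall s, (m <= s)%N -> forall r x, h r -> a x -> N m x -> N s (r * x).
Proof.
move=> TA.
have Ksub n : is_submodule (idl_zero ha) (idl_add ha) (idl_act ha)
                (fun u => N n (proj1_sig u)).
  exact: (submodule_preimage (idl_val_zero ha) (idl_val_add ha) (idl_val_act ha) (Nsub n)).
have [m [h [Fh Hh]]] := TA _ Ksub (fun n u => @Ndec n _).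
exists m, h => // s le_ms r x hr ax Nx.
exact: (Hh s le_ms r (exist _ x ax)).
Qed.

Lemma image_bound : tsa_quot_module F a ->
  exists m, exists2 h, F h &
    forall s, (m <= s)%N -> forall r x, h r -> N m x -> exists2 z, N s z & a (r * x - z).
Proof.
move=> TA.
have Qsub n := submodule_image (qp_zero a) (qp_add ha) (qp_act ha) (Nsub n).
have Qdec n C : (exists2 x, N n.+1 x & C = qp a x) -> exists2 x, N n x & C = qp a x.
  by case=> x Nx ->; exists x => //; apply: Ndec.
have [m [h [Fh Hh]]] := TA _ Qsub Qdec.
exists m, h => // s le_ms r x hr Nx.
have [z Nz] := Hh s le_ms r (qp a x) hr (ex_intro2 _ _ x Nx erefl).
by rewrite -(qp_act ha) => /(qp_inj ha); exists z.
Qed.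

Definition stabilizer (m : nat) : A -> Prop :=
  fun y => forall s, (m <= s)%N -> forall x, N m x -> N s (y * x).

Lemma stabilizer_ideal m : is_ideal (stabilizer m).
Proof.
split.
- by move=> s _ x _; rewrite mul0r; apply: (ideal0 (Nsub s)).
- move=> y y' Sy Sy' s le_ms x Nx; rewrite mulrDl.
  by apply: (idealD (Nsub s)); [apply: Sy | apply: Sy'].
- by move=> r y Sy s le_ms x Nx; rewrite -mulrA; apply: (idealMl (Nsub s)); apply: Sy.
Qed.

Lemma stabilizer_product m1 h1 m2 h2 :
  (forall s, (m1 <= s)%N -> forall r x, h1 r -> N m1 x -> exists2 z, N s z & a (r * x - z)) ->
  (forall s, (m2 <= s)%N -> forall r x, h2 r -> a x -> N m2 x -> N s (r * x)) ->
  forall x y, h1 x -> h2 y -> stabilizer (maxn m1 m2) (y * x).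
Proof.
move=> H1 H2 x y h1x h2y s le_ms n Nn.
have Nmono := chain_antitone Ndec.
have le_1s : (m1 <= s)%N by apply: leq_trans le_ms; apply: leq_maxl.
have le_2s : (m2 <= s)%N by apply: leq_trans le_ms; apply: leq_maxr.
have [z Nz axz] := H1 s le_1s x n h1x (Nmono _ _ _ (leq_maxl m1 m2) Nn).
(* x n - z lies in a and in N_m, hence y (x n - z) lies in N_s. *)
have Nd : N (maxn m1 m2) (x * n - z).
  apply: (idealB (Nsub _)); first exact: (idealMl (Nsub _)).
  exact: Nmono le_ms Nz.
have Nyd := H2 s le_2s y _ h2y axz (Nmono _ _ _ (leq_maxr m1 m2) Nd).
rewrite -mulrA -(subrK z (x * n)) mulrDr.
by apply: (idealD (Nsub s)) => //; apply: (idealMl (Nsub s)).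
Qed.

Lemma stabilizer_in_filter : tsa_ideal F ha -> tsa_quot_module F a ->
  exists m, F (stabilizer m).
Proof.
move=> TI TQ.
have [m1 [h1 Fh1 H1]] := image_bound TQ.
have [m2 [h2 Fh2 H2]] := trace_bound TI.
exists (maxn m1 m2).
apply: (filter_transitive hF (stabilizer_ideal _) Fh1) => x h1x.
apply: (filter_upward hF Fh2 (colon_ideal (stabilizer_ideal _) x)) => y h2y.
exact: (stabilizer_product H1 H2).
Qed.

End Extension.

Lemma tsa_ring_extension (A : comPzRingType) (F : (A -> Prop) -> Prop)
  (a : A -> Prop) (hF : gabriel_filter F) (ha : is_ideal a) :
  tsa_ideal F ha -> tsa_quot_module F a -> tsa_ring F.
Proof.
move=> TI TQ N Nsub Ndec.
have [m Fm] := stabilizer_in_filter hF Nsub Ndec TI TQ.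
by exists m, (stabilizer N m); split => // s le_ms r x Sr; apply: Sr.
Qed.

Section ChangeOfScalars.
Variables (A : comPzRingType) (F : (A -> Prop) -> Prop) (a : A -> Prop).
Hypothesis ha : is_ideal a.

Lemma quot_submoduleE (N : quot a -> Prop) :
  is_submodule (q_zero a) (@q_add _ a) (@q_act _ a) N <->
  is_submodule (q_zero a) (@q_add _ a) (@q_mul _ a) N.
Proof.
split; case=> N0 ND NZ; split => // r C NC.
- by rewrite -[r]qp_qrep -(q_act_mul ha); apply: NZ.
- by rewrite (q_act_mul ha); apply: NZ.
Qed.

Lemma pfilter_image (hF : gabriel_filter F) (h : A -> Prop) :
  F h -> pfilter F (fun C => exists2 r, h r & C = qp a r).
Proof.
move=> Fh.
have im_sub := submodule_image (qp_zero a) (qp_add ha) (qp_act ha) (filter_ideal hF Fh).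
split; first by apply/quot_submoduleE.
apply: (filter_upward hF Fh); last by move=> x hx; exists x.
exact: (submodule_preimage (qp_zero a) (qp_add ha) (qp_act ha) im_sub).
Qed.

Lemma tsa_quot_module_ring (hF : gabriel_filter F) :
  tsa_quot_module F a -> tsa_quot_ring F a.
Proof.
move=> TA N Nsub Ndec.
have [m [h [Fh Hh]]] := TA N (fun n => (quot_submoduleE _).2 (Nsub n)) Ndec.
exists m, (fun C => exists2 r, h r & C = qp a r); split; first exact: pfilter_image.
by move=> s le_ms _ D [r hr ->] ND; rewrite -(q_act_mul ha); apply: Hh.
Qed.

Lemma tsa_quot_ring_module : tsa_quot_ring F a -> tsa_quot_module F a.
Proof.
move=> TA N Nsub Ndec.
have [m [b [[_ Fb] Hb]]] := TA N (fun n => (quot_submoduleE _).1 (Nsub n)) Ndec.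
exists m, (fun x => b (qp a x)); split => // s le_ms r C br NC.
by rewrite (q_act_mul ha); apply: Hb.
Qed.

End ChangeOfScalars.

Theorem mainTheorem11 (A : comPzRingType) (F : (A -> Prop) -> Prop)
  (hF : gabriel_filter F) (a : A -> Prop) (ha : is_ideal a) :
  (tsa_ring F <-> tsa_ideal F ha /\ tsa_quot_module F a) /\
  (tsa_quot_module F a <-> tsa_quot_ring F a).
Proof.
split; last by split; [apply: tsa_quot_module_ring | apply: tsa_quot_ring_module].
split; last by case; apply: tsa_ring_extension.
move=> TA; split.
-
  exact: (totally_artinian_injective (idl_val_zero ha) (idl_val_add ha) (idl_val_act ha)
           (@proj1_sig_inj _ a)) TA.
-
  exact: (totally_artinian_surjective (qp_zero a) (qp_add ha) (qp_act ha) (@qp_surj _ a)) TA.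
Qed.
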